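(* A convex polyomino is (horizontally) centered if and only if for any pair of its cells there is a path in the polyomino connecting them of the form $S^{h_1}E^{k}S^{h_2}$ or $S^{h_1}W^{k}S^{h_2}$ with integers $h_1,h_2,k\geq 0$ (i.e. $h_1$ south steps, then $k$ east steps or $k$ west steps, then $h_2$ south steps).
   Context: A cell is a unit square of $\mathbb Z\times\mathbb Z$; a polyomino is a finite connected union of cells with no cut point, up to translation. A polyomino is convex if its intersection with every vertical and every horizontal line of cells is connected. The minimal bounding rectangle of a convex polyomino is the smallest lattice rectangle containing it. A convex polyomino is (horizontally) centered if it contains at least one row that touches both the left side and the right side of its minimal bounding rectangle. A path in a polyomino is a self-avoiding sequence of unit steps between adjacent cells of the polyomino, steps being $N=(0,1)$, $S=(0,-1)$, $E=(1,0)$, $W=(-1,0)$; exponents denote repetition of a step. *)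

(* Cells are pairs (x, y) : int * int, x = column, y = row. *)
From mathcomp Require Import all_boot all_order all_algebra.
Set Implicit Arguments. Unset Strict Implicit. Unset Printing Implicit Defensive.
Import Order.TTheory GRing.Theory Num.Theory.
Local Open Scope ring_scope.

Definition cell := (int * int)%type.

Inductive step := N | S | E | W.

Definition step_vec (s : step) : cell :=
  match s with
  | N => (0, 1) | S => (0, -1) | E => (1, 0) | W => (-1, 0)
  end.

Definition move (c : cell) (s : step) : cell :=
  (c.1 + (step_vec s).1, c.2 + (step_vec s).2).

Fixpoint walk (c : cell) (p : seq step) : seq cell :=
  c :: match p with [::] => [::] | s :: p' => walk (move c s) p' end.

Definition is_path (P : seq cell) (a b : cell) (p : seq step) : Prop :=
  all (fun c => c \in P) (walk a p) /\ uniq (walk a p) /\ last a (walk a p) = b.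

Definition polyomino (P : seq cell) : Prop :=
  P != [::] /\
  forall a b, a \in P -> b \in P -> exists p : seq step,
    all (fun c => c \in P) (walk a p) /\ last a (walk a p) = b.

Definition convex_poly (P : seq cell) : Prop :=
  (forall (y x1 x2 x : int), (x1, y) \in P -> (x2, y) \in P ->
      x1 <= x <= x2 -> (x, y) \in P) /\
  (forall (x y1 y2 y : int), (x, y1) \in P -> (x, y2) \in P ->
      y1 <= y <= y2 -> (x, y) \in P).

Definition centered (P : seq cell) : Prop :=
  exists (y x1 x2 : int), (x1, y) \in P /\ (x2, y) \in P /\
    forall c, c \in P -> x1 <= c.1 <= x2.

Definition SDS_path (P : seq cell) (a b : cell) : Prop :=
  exists (h1 k h2 : nat) (d : step), (d = E \/ d = W) /\
    is_path P a b (nseq h1 S ++ nseq k d ++ nseq h2 S).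

From mathcomp Require Import all_boot all_order all_algebra zify.
Set Implicit Arguments. Unset Strict Implicit. Unset Printing Implicit Defensive.
Import Order.TTheory GRing.Theory Num.Theory.
Local Open Scope ring_scope.

(* If row y0 spans the bounding box, convexity puts every cell of P in a
   column segment of P reaching row y0.  Hence for a above b one can walk
   down from a to the row ym of [b.2, a.2] closest to y0, cross row ym
   (which contains a.1 and b.1, so everything in between) and walk down to b.
   Conversely, an SDS path between a leftmost and a rightmost cell crosses a
   single row containing both of their columns. *)

Definition ray (c : cell) (s : step) (i : nat) : cell :=
  (c.1 + i%:Z * (step_vec s).1, c.2 + i%:Z * (step_vec s).2).

Lemma ray0 c s : ray c s 0 = c.
Proof. by case: c => x y; rewrite /ray !mul0r !addr0. Qed.

Lemma ray_move c s i : ray (move c s) s i = ray c s i.+1.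
Proof. by rewrite /ray /move; case: s => /=; congr pair; lia. Qed.

Lemma ray_S c i : ray c S i = (c.1, c.2 - i%:Z).
Proof. by rewrite /ray /= mulr0 addr0 mulrN1. Qed.

Lemma ray_horizontal c d i : d = E \/ d = W -> (ray c d i).2 = c.2.
Proof. by case=> ->; rewrite /ray /= mulr0 addr0. Qed.

Lemma foldl_move_nseq c s n : foldl move c (nseq n s) = ray c s n.
Proof. by elim: n c => [|n IHn] c /=; rewrite ?ray0 // IHn ray_move. Qed.

Lemma last_walk x c p : last x (walk c p) = foldl move c p.
Proof. by elim: p x c => [|s p IHp] x c //=. Qed.

Lemma mem_walk_foldl c p q : foldl move c p \in walk c (p ++ q).
Proof.
elim: p c => [|s p IHp] c /=; last by rewrite inE IHp orbT.
by case: q => [|s q]; rewrite /= mem_head.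
Qed.

Lemma all_walk_nseq_cat (Q : pred cell) c s n q :
  (forall i, (i < n)%N -> Q (ray c s i)) -> all Q (walk (ray c s n) q) ->
  all Q (walk c (nseq n s ++ q)).
Proof.
elim: n c => [|n IHn] c Qray; first by rewrite ray0.
rewrite /= -ray_move => Qq; have /= := Qray 0%N isT; rewrite ray0 => -> /=.
by apply: IHn Qq => i lt_in; rewrite ray_move; apply: Qray.
Qed.

Lemma all_walk_nseq (Q : pred cell) c s n :
  (forall i, (i <= n)%N -> Q (ray c s i)) -> all Q (walk c (nseq n s)).
Proof.
move=> Qray; rewrite -[nseq n s]cats0.
by apply: all_walk_nseq_cat => [i /ltnW|]; rewrite /= ?andbT; apply: Qray.
Qed.

Lemma sorted_walk (r : rel cell) (Q : pred step) c p :
  (forall c s, Q s -> r c (move c s)) -> all Q p -> sorted r (walk c p).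
Proof.
move=> rQ; elim: p c => [|s p IHp] c //= /andP[Qs /(IHp (move c s))].
by case: p {IHp} => [|s' p] /=; rewrite rQ.
Qed.

(* Walks of the form S^h1 d^k S^h2 are strictly monotone for this
   lexicographic order, hence self-avoiding. *)
Definition precedes (d : step) : rel cell := fun u v =>
  (v.2 < u.2) || (v.2 == u.2) && (u.1 * (step_vec d).1 < v.1 * (step_vec d).1).

Lemma precedes_trans d : transitive (precedes d).
Proof.
move=> v u w; rewrite /precedes.
move=> /orP[lt_uv|/andP[/eqP e lt_uv]] /orP[lt_vw|/andP[/eqP e' lt_vw]];
  apply/orP; try (by left; lia); by right; apply/andP; split; [apply/eqP|]; lia.
Qed.

Lemma precedes_irr d : irreflexive (precedes d).
Proof. by move=> u; rewrite /precedes !ltxx andbF. Qed.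

Lemma SDS_path_through_row (P : seq cell) (a b : cell) (y : int) :
  b.2 <= y <= a.2 ->
  (forall z, y <= z <= a.2 -> (a.1, z) \in P) ->
  (forall x, (a.1 <= x <= b.1) || (b.1 <= x <= a.1) -> (x, y) \in P) ->
  (forall z, b.2 <= z <= y -> (b.1, z) \in P) ->
  SDS_path P a b.
Proof.
move=> le_bya colA rowY colB.
pose d := if a.1 <= b.1 then E else W.
have Ed : d = E \/ d = W by rewrite /d; case: ifP; [left | right].
pose h1 := `|a.2 - y|%N; pose k := `|b.1 - a.1|%N; pose h2 := `|y - b.2|%N.
have ray2 i : ray (ray a S h1) d i = (a.1 + i%:Z * (step_vec d).1, y).
  by rewrite /ray; case: Ed => -> /=; congr pair; lia.
have ray3 i : ray (ray (ray a S h1) d k) S i = (b.1, y - i%:Z).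
  by rewrite ray_S ray2 /d; case: ifP => /= ?; congr pair; lia.
exists h1, k, h2, d; split=> //; split; [|split].
- apply: all_walk_nseq_cat => [i lt_ih1|]; first by rewrite ray_S colA //; lia.
  apply: all_walk_nseq_cat => [i lt_ik|].
    by rewrite ray2 rowY // /d; case: ifP => /= ?; lia.
  by apply: all_walk_nseq => i le_ih2; rewrite ray3 colB //; lia.
- apply: (sorted_uniq (@precedes_trans d) (@precedes_irr d)).
  apply: (sorted_walk
    (Q := fun s => (step_vec s == step_vec S) || (step_vec s == step_vec d))).
    move=> c s; case: Ed => ->; case: s => //= _; rewrite /precedes /=;
      apply/orP; (left; lia) || (right; apply/andP; split; [apply/eqP|]; lia).
  by rewrite !all_cat !all_nseq !eqxx !orbT.
- rewrite last_walk !foldl_cat !foldl_move_nseq ray3 [RHS]surjective_pairing.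
  by congr pair; lia.
Qed.

Lemma SDS_path_common_row (P : seq cell) (u v : cell) :
  SDS_path P u v -> exists y, (u.1, y) \in P /\ (v.1, y) \in P.
Proof.
case=> h1 [k [h2 [d [Ed [walkP [_ last_uv]]]]]].
have corner1 : foldl move u (nseq h1 S) \in P.
  by apply: (allP walkP); apply: mem_walk_foldl.
have corner2 : foldl move u (nseq h1 S ++ nseq k d) \in P.
  by apply: (allP walkP); rewrite catA mem_walk_foldl.
rewrite foldl_move_nseq in corner1; rewrite foldl_cat !foldl_move_nseq in corner2.
rewrite last_walk !foldl_cat !foldl_move_nseq in last_uv.
exists (ray u S h1).2; split; first by rewrite ray_S in corner1 *.
have -> : v.1 = (ray (ray u S h1) d k).1 by rewrite -last_uv ray_S.
by rewrite -(ray_horizontal _ k Ed) -surjective_pairing.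
Qed.

Section CenteredPolyomino.

Variables (P : seq cell) (y0 x1 x2 : int).
Hypotheses (convP : convex_poly P) (x1P : (x1, y0) \in P) (x2P : (x2, y0) \in P).
Hypothesis spanP : forall c, c \in P -> x1 <= c.1 <= x2.

Lemma mem_column_to_center c y :
  c \in P -> (y0 <= y <= c.2) || (c.2 <= y <= y0) -> (c.1, y) \in P.
Proof.
case: c => x yc cP; have c0P : (x, y0) \in P := convP.1 _ _ _ _ x1P x2P (spanP cP).
by case/orP; [apply: convP.2 c0P cP | apply: convP.2 cP c0P].
Qed.

Lemma SDS_path_centered a b : a \in P -> b \in P -> b.2 <= a.2 -> SDS_path P a b.
Proof.
case: a b => [xa ya] [xb yb] aP bP /= le_ba; pose ym := Num.max yb (Num.min y0 ya).
have ayP : (xa, ym) \in P by apply: mem_column_to_center aP _; rewrite /ym /=; lia.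
have byP : (xb, ym) \in P by apply: mem_column_to_center bP _; rewrite /ym /=; lia.
apply: (@SDS_path_through_row P _ _ ym) => /= [|z le_z|x /orP[] le_x|z le_z].
- by rewrite /ym; lia.
- by apply: mem_column_to_center aP _; rewrite /ym /= in le_z *; lia.
- exact: convP.1 ayP byP le_x.
- exact: convP.1 byP ayP le_x.
- by apply: mem_column_to_center bP _; rewrite /ym /= in le_z *; lia.
Qed.

End CenteredPolyomino.

Lemma seq_has_min (T : eqType) disp (U : orderType disp) (f : T -> U) (s : seq T) :
  s != [::] -> exists2 m, m \in s & forall c, c \in s -> (f m <= f c)%O.
Proof.
elim: s => [//|x [|y s] IHs] _.
  by exists x => [|c]; rewrite ?mem_head // inE => /eqP ->.
have [m ms min_m] := IHs isT; have [le_xm|lt_mx] := leP (f x) (f m).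
  exists x => [|c]; rewrite ?mem_head // inE => /orP[/eqP -> //|cs].
  exact: le_trans le_xm (min_m c cs).
exists m => [|c]; rewrite inE ?ms ?orbT // => /orP[/eqP ->|]; last exact: min_m.
exact: ltW.
Qed.

Theorem mainTheorem2 (P : seq cell) :
  polyomino P -> convex_poly P ->
  (centered P <->
   forall a b, a \in P -> b \in P -> SDS_path P a b \/ SDS_path P b a).
Proof.
move=> [P_ne _] convP; split.
  case=> y0 [x1 [x2 [x1P [x2P spanP]]]] a b aP bP.
  have SDS_down := SDS_path_centered convP x1P x2P spanP.
  have [le_ba|/ltW le_ab] := lerP b.2 a.2.
    by left; apply: SDS_down aP bP le_ba.
  by right; apply: SDS_down bP aP le_ab.
move=> SDS_P.
have [l lP min_l] := seq_has_min (fun c : cell => c.1) P_ne.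
have [r rP min_r] := seq_has_min (fun c : cell => - c.1) P_ne.
have [y [lyP ryP]] : exists y, (l.1, y) \in P /\ (r.1, y) \in P.
  by case: (SDS_P l r lP rP) => /SDS_path_common_row [y [? ?]]; exists y.
exists y, l.1, r.1; do 2!split=> //.
by move=> c cP; have := min_l c cP; have := min_r c cP; rewrite /=; lia.
Qed.
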